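(* Let $(X,\widetilde{\tau}_X,\mathfrak{a}_E,E)$ and $(Y,\widetilde{\tau}_Y,\mathfrak{b}_K,K)$ be soft aura topological spaces and $f_{up}$ a soft mapping from $(X,E)$ to $(Y,K)$. If $f_{up}$ is soft $\mathfrak{a}$-continuous then it is soft $\mathfrak{a}$-$\alpha$-continuous; if it is soft $\mathfrak{a}$-$\alpha$-continuous then it is both soft $\mathfrak{a}$-semi-continuous and soft $\mathfrak{a}$-pre-continuous; and if it is soft $\mathfrak{a}$-semi-continuous or soft $\mathfrak{a}$-pre-continuous then it is soft $\mathfrak{a}$-$\beta$-continuous.
   Context: For a nonempty set $X$ and nonempty parameter set $E$, a soft set is a map $F:E\to\mathcal{P}(X)$, written $(F,E)$; $\mathrm{SS}(X,E)$ denotes all soft sets; $\sqsubseteq$, $\sqcup$ are parameterwise. A soft topology on $X$ over $E$ is a subfamily of $\mathrm{SS}(X,E)$ containing the soft sets with all values $\emptyset$ and all values $X$, closed under arbitrary soft unions and finite soft intersections. A soft scope function is a map $\mathfrak{a}_E:X\to\widetilde{\tau}_X$ with $x\in\mathfrak{a}_E(x)(e)$ for all $x,e$; $(X,\widetilde{\tau}_X,\mathfrak{a}_E,E)$ is a soft aura topological space (similarly $(Y,\widetilde{\tau}_Y,\mathfrak{b}_K,K)$). $\mathrm{cl}_{\mathfrak{a}}(G,E)(e)=\{x:\mathfrak{a}_E(x)(e)\cap G(e)\neq\emptyset\}$, $\mathrm{int}_{\mathfrak{a}}(G,E)(e)=\{x:\mathfrak{a}_E(x)(e)\subseteq G(e)\}$;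 analogously $\mathrm{int}_{\mathfrak{b}}$ on $Y$ using $\mathfrak{b}_K$. $(G,E)$ is soft $\mathfrak{a}$-open if $\mathrm{int}_{\mathfrak{a}}(G,E)=(G,E)$ (similarly soft $\mathfrak{b}$-open in $Y$); soft $\mathfrak{a}$-semi-open if $(G,E)\sqsubseteq\mathrm{cl}_{\mathfrak{a}}(\mathrm{int}_{\mathfrak{a}}(G,E))$; soft $\mathfrak{a}$-pre-open if $(G,E)\sqsubseteq\mathrm{int}_{\mathfrak{a}}(\mathrm{cl}_{\mathfrak{a}}(G,E))$; soft $\mathfrak{a}$-$\alpha$-open if $(G,E)\sqsubseteq\mathrm{int}_{\mathfrak{a}}(\mathrm{cl}_{\mathfrak{a}}(\mathrm{int}_{\mathfrak{a}}(G,E)))$; soft $\mathfrak{a}$-$\beta$-open if $(G,E)\sqsubseteq\mathrm{cl}_{\mathfrak{a}}(\mathrm{int}_{\mathfrak{a}}(\mathrm{cl}_{\mathfrak{a}}(G,E)))$. A soft mapping $f_{up}=(u,p)$ consists of $u:X\to Y$, $p:E\to K$, with $f_{up}^{-1}(V,K)=(H,E)$, $H(e)=u^{-1}(V(p(e)))$. $f_{up}$ is soft $\mathfrak{a}$-continuous (resp. $\mathfrak{a}$-semi-, $\mathfrak{a}$-pre-, $\mathfrak{a}$-$\alpha$-, $\mathfrak{a}$-$\beta$-continuous) if $f_{up}^{-1}(V,K)$ is soft $\mathfrak{a}$-open (resp. $\mathfrak{a}$-semi-open, $\mathfrak{a}$-pre-open, $\mathfrak{a}$-$\alpha$-open, $\mathfrak{a}$-$\beta$-open)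 for every soft $\mathfrak{b}$-open $(V,K)$ in $Y$. *)

Set Implicit Arguments.

Definition soft_set (X E : Type) := E -> X -> Prop.

Definition soft_sub {X E : Type} (F G : soft_set X E) : Prop :=
  forall e x, F e x -> G e x.

Definition soft_null {X E : Type} : soft_set X E := fun _ _ => False.
Definition soft_abs {X E : Type} : soft_set X E := fun _ _ => True.

Definition soft_Union {X E : Type} (S : soft_set X E -> Prop) : soft_set X E :=
  fun e x => exists F, S F /\ F e x.
Definition soft_inter {X E : Type} (F G : soft_set X E) : soft_set X E :=
  fun e x => F e x /\ G e x.

Record soft_topology (X E : Type) := {
  sopen : soft_set X E -> Prop;
  sopen_null : sopen soft_null;
  sopen_abs : sopen soft_abs;
  sopen_Union : forall S, (forall F, S F -> sopen F) -> sopen (soft_Union S);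
  sopen_inter : forall F G, sopen F -> sopen G -> sopen (soft_inter F G)
}.

Definition soft_scope {X E : Type} (tau : soft_topology X E)
  (a : X -> soft_set X E) : Prop :=
  (forall x, sopen tau (a x)) /\ (forall x e, a x e x).

Definition cl_a {X E : Type} (a : X -> soft_set X E) (G : soft_set X E)
  : soft_set X E := fun e x => exists y, a x e y /\ G e y.
Definition int_a {X E : Type} (a : X -> soft_set X E) (G : soft_set X E)
  : soft_set X E := fun e x => forall y, a x e y -> G e y.

Definition a_open {X E : Type} (a : X -> soft_set X E) (G : soft_set X E) :=
  int_a a G = G.
Definition a_semi_open {X E : Type} (a : X -> soft_set X E) G :=
  soft_sub G (cl_a a (int_a a G)).
Definition a_pre_open {X E : Type} (a : X -> soft_set X E) G :=
  soft_sub G (int_a a (cl_a a G)).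
Definition a_alpha_open {X E : Type} (a : X -> soft_set X E) G :=
  soft_sub G (int_a a (cl_a a (int_a a G))).
Definition a_beta_open {X E : Type} (a : X -> soft_set X E) G :=
  soft_sub G (cl_a a (int_a a (cl_a a G))).

(* preimage under the soft mapping f_up = (u, p) *)
Definition soft_preimage {X E Y K : Type} (u : X -> Y) (p : E -> K)
  (V : soft_set Y K) : soft_set X E := fun e x => V (p e) (u x).

Definition soft_cont_wrt {X E Y K : Type} (P : soft_set X E -> Prop)
  (b : Y -> soft_set Y K) (u : X -> Y) (p : E -> K) : Prop :=
  forall V, a_open b V -> P (soft_preimage u p V).

Definition a_continuous {X E Y K} (a : X -> soft_set X E) b (u : X -> Y) (p : E -> K) :=
  soft_cont_wrt (a_open a) b u p.
Definition a_semi_continuous {X E Y K} (a : X -> soft_set X E) b (u : X -> Y) (p : E -> K) :=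
  soft_cont_wrt (a_semi_open a) b u p.
Definition a_pre_continuous {X E Y K} (a : X -> soft_set X E) b (u : X -> Y) (p : E -> K) :=
  soft_cont_wrt (a_pre_open a) b u p.
Definition a_alpha_continuous {X E Y K} (a : X -> soft_set X E) b (u : X -> Y) (p : E -> K) :=
  soft_cont_wrt (a_alpha_open a) b u p.
Definition a_beta_continuous {X E Y K} (a : X -> soft_set X E) b (u : X -> Y) (p : E -> K) :=
  soft_cont_wrt (a_beta_open a) b u p.


(* Only the reflexivity of the scope function matters: it gives int_a G ⊑ G ⊑ cl_a G,
   and together with the monotonicity of int_a and cl_a this yields the usual chain
   open ⇒ α-open ⇒ semi-open, pre-open ⇒ β-open.  Continuity notions are preimage
   conditions, so they inherit every implication between the open-set notions. *)

Set Implicit Arguments.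

Lemma soft_sub_trans (X E : Type) (F G H : soft_set X E) :
  soft_sub F G -> soft_sub G H -> soft_sub F H.
Proof. intros FG GH e x Fx; apply GH, FG, Fx. Qed.

Section AuraOperators.

Variables (X E : Type) (a : X -> soft_set X E).

Lemma int_a_mono (G H : soft_set X E) :
  soft_sub G H -> soft_sub (int_a a G) (int_a a H).
Proof. intros GH e x Gx y axy; apply GH, Gx, axy. Qed.

Lemma cl_a_mono (G H : soft_set X E) :
  soft_sub G H -> soft_sub (cl_a a G) (cl_a a H).
Proof. intros GH e x [y [axy Gy]]; exists y; split; [exact axy | apply GH, Gy]. Qed.

Hypothesis a_refl : forall x e, a x e x.

Lemma int_a_sub (G : soft_set X E) : soft_sub (int_a a G) G.
Proof. intros e x Gx; apply Gx, a_refl. Qed.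

Lemma sub_cl_a (G : soft_set X E) : soft_sub G (cl_a a G).
Proof. intros e x Gx; exists x; split; [apply a_refl | exact Gx]. Qed.

Lemma a_open_alpha_open (G : soft_set X E) : a_open a G -> a_alpha_open a G.
Proof.
  unfold a_open, a_alpha_open; intros HG e x Gx.
  rewrite HG; rewrite <- HG in Gx.
  exact (int_a_mono (sub_cl_a G) Gx).
Qed.

Lemma a_alpha_open_semi_open (G : soft_set X E) :
  a_alpha_open a G -> a_semi_open a G.
Proof. intros HG; eapply soft_sub_trans; [exact HG | apply int_a_sub]. Qed.

Lemma a_alpha_open_pre_open (G : soft_set X E) :
  a_alpha_open a G -> a_pre_open a G.
Proof.
  intros HG; eapply soft_sub_trans; [exact HG |].
  apply int_a_mono, cl_a_mono, int_a_sub.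
Qed.

Lemma a_semi_open_beta_open (G : soft_set X E) :
  a_semi_open a G -> a_beta_open a G.
Proof.
  intros HG; eapply soft_sub_trans; [exact HG |].
  apply cl_a_mono, int_a_mono, sub_cl_a.
Qed.

Lemma a_pre_open_beta_open (G : soft_set X E) :
  a_pre_open a G -> a_beta_open a G.
Proof. intros HG; eapply soft_sub_trans; [exact HG | apply sub_cl_a]. Qed.

End AuraOperators.

Lemma soft_cont_wrt_mono (X E Y K : Type) (P Q : soft_set X E -> Prop)
  (b : Y -> soft_set Y K) (u : X -> Y) (p : E -> K) :
  (forall G, P G -> Q G) -> soft_cont_wrt P b u p -> soft_cont_wrt Q b u p.
Proof. intros PQ HP V HV; apply PQ, HP, HV. Qed.

Theorem theorem5p2 (X E Y K : Type) (x0 : X) (e0 : E) (y0 : Y) (k0 : K)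
  (tauX : soft_topology X E) (a : X -> soft_set X E) (ha : soft_scope tauX a)
  (tauY : soft_topology Y K) (b : Y -> soft_set Y K) (hb : soft_scope tauY b)
  (u : X -> Y) (p : E -> K) :
  (a_continuous a b u p -> a_alpha_continuous a b u p) /\
  (a_alpha_continuous a b u p ->
     a_semi_continuous a b u p /\ a_pre_continuous a b u p) /\
  (a_semi_continuous a b u p \/ a_pre_continuous a b u p ->
     a_beta_continuous a b u p).
Proof.
  destruct ha as [_ a_refl].
  split; [| split].
  - apply soft_cont_wrt_mono, a_open_alpha_open, a_refl.
  - intros Halpha; split; revert Halpha; apply soft_cont_wrt_mono.
    + apply a_alpha_open_semi_open, a_refl.
    + apply a_alpha_open_pre_open, a_refl.
  - intros [Hsemi | Hpre]; [revert Hsemi | revert Hpre]; apply soft_cont_wrt_mono.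
    + apply a_semi_open_beta_open, a_refl.
    + apply a_pre_open_beta_open, a_refl.
Qed.
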